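(* Let $(\underline{\mathbf{r}},\overline{\mathbf{r}},\mathbf{c},\mathbf{c})$ be a realizable four-tuple of integer vectors with $\underline{\mathbf{r}}$ (length $n_1$) and $\mathbf{c}$ (length $n_2$) non-increasing and $\underline{\mathbf{r}}\le\overline{\mathbf{r}}$. Run the procedure Phase Two described in the context, and let $\mathbf{r}^{(k)}$ and $\overline{\mathbf{r}}^{(k)}$ be the states of $\mathbf{r}$ and $\overline{\mathbf{r}}$ after exactly $k$ iterations of its outer loop. Then $(\mathbf{r}^{(k)},\mathbf{r}^{(k)},\mathbf{c},\mathbf{c})$ is realizable if and only if $k=\delta_2=\Sigma_{n_2}\mathbf{c}-\Sigma_{n_1}\underline{\mathbf{r}}$.
   Context: Inequalities between vectors are componentwise. A four-tuple $(\underline{\mathbf{r}},\overline{\mathbf{r}},\underline{\mathbf{c}},\overline{\mathbf{c}})$ (first two of length $n_1$, last two of length $n_2$) is realizable if there is a bipartite graph $G=(U,V,E)$, $U=\{u_1,\dots,u_{n_1}\}$, $V=\{v_1,\dots,v_{n_2}\}$, with $\underline r_i\le d_G(u_i)\le\overline r_i$ and $\underline c_j\le d_G(v_j)\le\overline c_j$ for all $i,j$. $\Sigma_k\mathbf{x}=\sum_{i=1}^k x_i$. Phase Two: set $\mathbf{r}\leftarrow\underline{\mathbf{r}}$, $\delta_2\leftarrow\Sigma_{n_2}\mathbf{c}-\Sigma_{n_1}\underline{\mathbf{r}}$, $i\leftarrow n_1$; for $k=1,\dots,\delta_2$ (outer loop): while $r_i=\overline r_i$ set $i\leftarrow i-1$;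 let $j=\min\{\ell:r_\ell=r_i\}$; swap $\overline r_i$ and $\overline r_j$; set $r_j\leftarrow r_j+1$. Return $(\mathbf{r},\mathbf{c})$. *)

From mathcomp Require Import all_boot all_order all_algebra.
Set Implicit Arguments. Unset Strict Implicit. Unset Printing Implicit Defensive.
Import Order.TTheory GRing.Theory Num.Theory.
Local Open Scope ring_scope.

(* Vectors are sequences of integers, indexed from 0 (paper: from 1). *)

Definition degU (n1 n2 : nat) (E : {set 'I_n1 * 'I_n2}) (i : 'I_n1) : nat :=
  #|[set j : 'I_n2 | (i, j) \in E]|.
Definition degV (n1 n2 : nat) (E : {set 'I_n1 * 'I_n2}) (j : 'I_n2) : nat :=
  #|[set i : 'I_n1 | (i, j) \in E]|.

Definition realizable (n1 n2 : nat) (rl ru cl cu : seq int) : Prop :=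
  [/\ size rl = n1, size ru = n1, size cl = n2, size cu = n2 &
  exists E : {set 'I_n1 * 'I_n2},
    (forall i : 'I_n1, rl`_i <= (degU E i)%:Z <= ru`_i) /\
    (forall j : 'I_n2, cl`_j <= (degV E j)%:Z <= cu`_j)].

Definition nonincreasing (x : seq int) : Prop :=
  forall i j : nat, (i <= j)%N -> (j < size x)%N -> x`_j <= x`_i.

(* The inner "while r_i = rbar_i do i <- i-1" loop, started at index i:
   returns the largest i' <= i with r_i' <> rbar_i', or None if the loop
   would run past the first index. *)
Fixpoint scan (r rb : seq int) (i : nat) : option nat :=
  match i with
  | 0%N => if r`_0 != rb`_0 then Some 0%N else None
  | p.+1 => if r`_p.+1 != rb`_p.+1 then Some p.+1 else scan r rb p
  end.

Definition state := (seq int * seq int * nat)%type.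

Definition step (s : state) : option state :=
  let: (r, rb, i0) := s in
  match scan r rb i0 with
  | None => None
  | Some i =>
      let j := find (pred1 r`_i) r in
      let rb' := set_nth 0 (set_nth 0 rb i rb`_j) j rb`_i in
      let r' := set_nth 0 r j (r`_j + 1) in
      Some (r', rb', i)
  end.

(* State after exactly k iterations of the outer loop, starting from
   r = rl, rbar = ru, i = n1 (0-based: n1 - 1). *)
Fixpoint phase_two (rl ru : seq int) (k : nat) : option state :=
  match k with
  | 0%N => Some (rl, ru, (size rl).-1)
  | k'.+1 => obind step (phase_two rl ru k')
  end.

From mathcomp Require Import all_boot all_order all_algebra.
From mathcomp Require Import perm zify.
Set Implicit Arguments.
Unset Strict Implicit.
Unset Printing Implicit Defensive.
Import Order.TTheory GRing.Theory Num.Theory.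
Local Open Scope ring_scope.

(* Phase Two preserves three invariants: (r, rbar, c, c) is realizable, r is
   non-increasing, and every row after the scan pointer is saturated
   (r_l = rbar_l).  While sum r < sum c, a realizing graph has a row of degree
   above r_l; it lies at or before the pointer, so the scan stops at a row i
   with r_i < rbar_i.  If row i has degree exactly r_i, an earlier row l has
   degree > r_l >= r_i and one of its edges can be moved to row i.  Then row i
   has degree > r_i, so exchanging rows i and j (where r_i = r_j) realizes r
   with r_j incremented and the upper bounds of rows i, j swapped; incrementing
   the first occurrence of a value keeps r sorted.  Hence every iteration
   raises sum r by one, and (r, r, c, c) is realizable exactly when
   sum r = sum c, because a realization of (r, rbar, c, c) with sum r = sum c
   attains every lower bound. *)

Lemma sum_ltr_exists (I : finType) (R : realDomainType) (F G : I -> R) :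
  \sum_i F i < \sum_i G i -> exists i, F i < G i.
Proof.
move=> lt_FG; have [i lt_i | /= nlt_FG] := pickP (fun i => F i < G i).
  by exists i.
by move: lt_FG; rewrite ltNge ler_sum // => i _; rewrite leNgt nlt_FG.
Qed.

Lemma sum_set_nth (V : zmodType) (s : seq V) n (j : 'I_n) x :
  \sum_(l < n) (set_nth 0 s j x)`_l = \sum_(l < n) s`_l - s`_j + x.
Proof.
rewrite (bigD1 j) //= [in RHS](bigD1 j) //= nth_set_nth /= eqxx.
rewrite (eq_bigr (fun l : 'I_n => s`_l)) => [|l nlj]; last first.
  by rewrite nth_set_nth /= ifN_eq.
by rewrite [s`_j + _]addrC addrK addrC.
Qed.

Lemma nth_swap (T : Type) (x0 : T) (s : seq T) n (i j x : 'I_n) :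
  nth x0 (set_nth x0 (set_nth x0 s i (nth x0 s j)) j (nth x0 s i)) x
  = nth x0 s (tperm i j x).
Proof.
rewrite nth_set_nth /= nth_set_nth /=.
case: tpermP => [->|->|/eqP nxi /eqP nxj]; last by rewrite !ifN_eq.
- by case: eqP => [/val_inj -> // | _]; rewrite eqxx.
- by rewrite eqxx.
Qed.

Lemma set_nth_tperm (T : Type) (x0 : T) (s : seq T) n (i j x : 'I_n) y :
  nth x0 s i = nth x0 s j ->
  nth x0 (set_nth x0 s j y) x = nth x0 (set_nth x0 s i y) (tperm i j x).
Proof.
move=> eq_ij; rewrite !nth_set_nth /=.
case: tpermP => [->|->|/eqP nxi /eqP nxj]; last by rewrite !ifN_eq.
- by rewrite eq_sym; case: eqP.
- by rewrite !eqxx.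
Qed.

Lemma nonincreasing_incr_first (s : seq int) j :
  nonincreasing s -> (j < size s)%N -> (forall a, (a < j)%N -> s`_a != s`_j) ->
  nonincreasing (set_nth 0 s j (s`_j + 1)).
Proof.
move=> s_sorted lt_j_s first_j a b le_ab.
rewrite size_set_nth (maxn_idPr lt_j_s) => lt_b_s; rewrite !nth_set_nth /=.
case: eqP => [eq_bj|ne_bj]; case: eqP => [eq_aj|ne_aj] //.
- have lt_aj : (a < j)%N by lia.
  by rewrite lezD1 lt_neqAle eq_sym first_j //= s_sorted // ltnW.
- apply: le_trans (s_sorted j b _ lt_b_s) _; first by rewrite -eq_aj.
  by rewrite lerDl.
- exact: s_sorted.
Qed.

Lemma scan_last_diff (r rb : seq int) i0 l0 :
  (l0 <= i0)%N -> r`_l0 != rb`_l0 ->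
  exists2 i, scan r rb i0 = Some i &
    [/\ (i <= i0)%N, r`_i != rb`_i & forall l, (i < l <= i0)%N -> r`_l = rb`_l].
Proof.
elim: i0 => [|p IHp] le_l0 ne_l0 /=.
  move: le_l0 ne_l0; rewrite leqn0 => /eqP -> ne_0; rewrite ne_0.
  by exists 0%N => //; split=> // l; rewrite ltnNge andbC => /andP[->].
have [ne_p1|/negbFE/eqP eq_p1] := ifP.
  by exists p.+1 => //; split=> // l; rewrite ltnNge andbC => /andP[->].
have le_l0p : (l0 <= p)%N.
  rewrite -ltnS ltn_neqAle le_l0 andbT.
  by apply: contraNneq ne_l0 => ->; rewrite eq_p1.
have [i scan_i [le_ip ne_i eq_above]] := IHp le_l0p ne_l0.
exists i => //; split=> [||l /andP[lt_il]]; rewrite ?(leqW le_ip) //.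
rewrite leq_eqVlt => /orP[/eqP -> //|lt_lp1].
by apply: eq_above; rewrite lt_il.
Qed.

Section Degrees.
Variables n1 n2 : nat.
Implicit Types E : {set 'I_n1 * 'I_n2}.

Lemma sum_degU_degV E : (\sum_(i < n1) degU E i = \sum_(j < n2) degV E j)%N.
Proof.
rewrite /degU /degV.
under eq_bigr do rewrite -sum1dep_card big_mkcond /=.
under [RHS]eq_bigr do rewrite -sum1dep_card big_mkcond /=.
exact: exchange_big.
Qed.

Lemma degU_perm E (s : {perm 'I_n1}) :
  exists E', (forall i, degU E' i = degU E (s i)) /\
             (forall j, degV E' j = degV E j).
Proof.
exists [set p | (s p.1, p.2) \in E]; split=> [i|j].
  by apply: eq_card => j; rewrite !inE.
rewrite /degV -[in RHS](card_preimset _ (@perm_inj _ s)).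
by apply: eq_card => i; rewrite !inE.
Qed.

Lemma degU_move_edge E a b :
  (degU E b < degU E a)%N ->
  exists E', [/\ (degU E' a).+1 = degU E a, degU E' b = (degU E b).+1,
                 forall i, i != a -> i != b -> degU E' i = degU E i &
                 forall j, degV E' j = degV E j].
Proof.
move=> lt_ba.
have ne_ab : a != b by apply: contraTneq lt_ba => ->; rewrite ltnn.
have [v /andP[av bv]] : exists v, ((a, v) \in E) && ((b, v) \notin E).
  apply/existsP; apply: contraLR lt_ba.
  rewrite negb_exists -leqNgt => /forallP nbv.
  apply: subset_leq_card; apply/subsetP => j; rewrite !inE => aj.
  by have := nbv j; rewrite aj negbK.
exists ((b, v) |: (E :\ (a, v))); split.
- rewrite /degU [in RHS](cardsD1 v) inE av; congr (_.+1); apply: eq_card => j.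
  by rewrite !inE !xpair_eqE eqxx (negbTE ne_ab).
- rewrite /degU (@eq_card _ _ (v |: [set j | (b, j) \in E])).
    by rewrite cardsU1 inE bv.
  by move=> j; rewrite !inE !xpair_eqE eqxx (eq_sym b a) (negbTE ne_ab).
- move=> i ne_ia ne_ib; apply: eq_card => j.
  by rewrite !inE !xpair_eqE (negbTE ne_ia) (negbTE ne_ib).
- move=> j; have [-> | ne_jv] := eqVneq j v; last first.
    by apply: eq_card => i; rewrite !inE !xpair_eqE (negbTE ne_jv) !andbF.
  rewrite /degV [in RHS](cardsD1 a) inE av.
  rewrite (@eq_card _ _ (b |: ([set i | (i, v) \in E] :\ a))) => [|i].
    by rewrite cardsU1 !inE (negbTE bv) andbF.
  by rewrite !inE !xpair_eqE !eqxx !andbT.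
Qed.

End Degrees.

Section PhaseTwo.
Variables (n1 n2 : nat) (c : seq int).

Lemma sum_degU_col_exact (E : {set 'I_n1 * 'I_n2}) :
  (forall j : 'I_n2, c`_j <= (degV E j)%:Z <= c`_j) ->
  \sum_(i < n1) (degU E i)%:Z = \sum_(j < n2) c`_j.
Proof.
move=> colE; rewrite -(big_morph Posz PoszD (erefl 0%:Z)) sum_degU_degV.
rewrite (big_morph Posz PoszD (erefl 0%:Z)); apply: eq_bigr => j _.
by apply/eqP; rewrite eq_le andbC; apply: colE.
Qed.

Lemma realizable_exact (r rb : seq int) :
  realizable n1 n2 r rb c c ->
  realizable n1 n2 r r c c <-> \sum_(i < n1) r`_i = \sum_(j < n2) c`_j.
Proof.
case=> sr srb sc _ [E [rowE colE]]; split.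
  case=> _ _ _ _ [E' [rowE' colE']]; rewrite -(sum_degU_col_exact colE').
  by apply: eq_bigr => i _; apply/eqP; rewrite eq_le; apply: rowE'.
move=> sum_r; split=> //; exists E; split=> // i.
have gap0 : (degU E i)%:Z - r`_i = 0.
  apply: (psumr_eq0P (P := predT) (F := fun i => (degU E i)%:Z - r`_i)) => //.
    by move=> l _; rewrite subr_ge0; case/andP: (rowE l).
  by rewrite sumrB (sum_degU_col_exact colE) sum_r subrr.
by move/eqP: gap0; rewrite subr_eq0 => /eqP ->; rewrite lexx.
Qed.

Definition phase_two_inv (r rb : seq int) (i0 : nat) : Prop :=
  [/\ realizable n1 n2 r rb c c, nonincreasing r &
      forall l, (i0 < l)%N -> r`_l = rb`_l].

Lemma scan_unsaturated (r rb : seq int) (E : {set 'I_n1 * 'I_n2}) i0 :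
  size r = n1 -> size rb = n1 ->
  (forall l : 'I_n1, r`_l <= (degU E l)%:Z <= rb`_l) ->
  (forall l, (i0 < l)%N -> r`_l = rb`_l) ->
  \sum_(l < n1) r`_l < \sum_(l < n1) (degU E l)%:Z ->
  exists2 i : 'I_n1, scan r rb i0 = Some (i : nat) &
    r`_i < rb`_i /\ forall l, (i < l)%N -> r`_l = rb`_l.
Proof.
move=> sr srb rowE sat_tail sum_lt.
have [l0 lt_l0] := sum_ltr_exists sum_lt.
have ne_l0 : r`_l0 != rb`_l0.
  case/andP: (rowE l0) => _ le_rb.
  by rewrite lt_eqF // (lt_le_trans lt_l0 le_rb).
have le_l0 : (l0 <= i0)%N.
  by rewrite leqNgt; apply: contra ne_l0 => /sat_tail ->.
have [i scan_i [le_i0 ne_i sat_between]] := scan_last_diff le_l0 ne_l0.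
have lt_i : (i < n1)%N.
  by rewrite ltnNge; apply: contra ne_i => ge_i; rewrite !nth_default ?sr ?srb.
exists (Ordinal lt_i) => //=; split=> [|l lt_il].
  case/andP: (rowE (Ordinal lt_i)) => le_r le_rb.
  by rewrite lt_neqAle ne_i (le_trans le_r le_rb).
have [le_l|lt_l] := leqP l i0; last exact: sat_tail.
by apply: sat_between; rewrite lt_il.
Qed.

Lemma raise_degree (r rb : seq int) (E : {set 'I_n1 * 'I_n2}) (i : 'I_n1) :
  size r = n1 -> nonincreasing r ->
  (forall l : 'I_n1, r`_l <= (degU E l)%:Z <= rb`_l) ->
  (forall l, (i < l)%N -> r`_l = rb`_l) -> r`_i < rb`_i ->
  \sum_(l < n1) r`_l < \sum_(l < n1) (degU E l)%:Z ->
  exists E' : {set 'I_n1 * 'I_n2},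
    [/\ forall l : 'I_n1, r`_l <= (degU E' l)%:Z <= rb`_l,
        forall j, degV E' j = degV E j & r`_i < (degU E' i)%:Z].
Proof.
move=> sr r_sorted rowE sat_tail lt_ri sum_lt.
have [lt_deg|ge_deg] := ltP r`_i (degU E i)%:Z; first by exists E.
have deg_i : (degU E i)%:Z = r`_i.
  by apply/eqP; rewrite eq_le ge_deg; case/andP: (rowE i).
have [l lt_l] := sum_ltr_exists sum_lt.
have lt_li : (l < i)%N.
  rewrite ltnNge leq_eqVlt negb_or; apply/andP; split.
    by apply: contraTneq lt_l => /val_inj <-; rewrite deg_i ltxx.
  apply/negP => /sat_tail eq_l; case/andP: (rowE l) => _.
  by rewrite -eq_l leNgt lt_l.
have le_ril : r`_i <= r`_l by apply: r_sorted (ltnW lt_li) _; rewrite sr.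
have lt_deg : (degU E i < degU E l)%N.
  by rewrite -ltz_nat deg_i (le_lt_trans le_ril lt_l).
have [E' [deg_l deg_i' deg_other colE']] := degU_move_edge lt_deg.
exists E'; split=> // [x|]; last by rewrite deg_i' -addn1 PoszD deg_i ltrDl.
have [->|ne_xl] := eqVneq x l.
  by case/andP: (rowE l) => _; move: lt_l; rewrite -deg_l; lia.
have [->|ne_xi] := eqVneq x i.
  by rewrite deg_i' -addn1 PoszD deg_i lerDl lezD1 lt_ri.
by rewrite deg_other.
Qed.

Lemma realize_incr_swap (r rb : seq int) (E : {set 'I_n1 * 'I_n2})
    (i j : 'I_n1) :
  r`_i = r`_j ->
  (forall l : 'I_n1, r`_l <= (degU E l)%:Z <= rb`_l) -> r`_i < (degU E i)%:Z ->
  exists E' : {set 'I_n1 * 'I_n2},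
    (forall l : 'I_n1, (set_nth 0 r j (r`_j + 1))`_l <= (degU E' l)%:Z
                       <= (set_nth 0 (set_nth 0 rb i rb`_j) j rb`_i)`_l) /\
    (forall y, degV E' y = degV E y).
Proof.
move=> r_ij rowE lt_deg; have [E' [rowE' colE']] := degU_perm E (tperm i j).
exists E'; split=> // x; rewrite rowE' nth_swap (set_nth_tperm x _ r_ij).
move: (tperm i j x) => y; rewrite nth_set_nth /=.
have [->|ne_yi] := eqVneq y i; last by rewrite ifN_eq //; apply: rowE.
by rewrite eqxx -r_ij lezD1 lt_deg; case/andP: (rowE i).
Qed.

Lemma step_inv (r rb : seq int) i0 :
  phase_two_inv r rb i0 -> \sum_(l < n1) r`_l < \sum_(j < n2) c`_j ->
  exists r' rb' i, step (r, rb, i0) = Some (r', rb', i) /\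
    phase_two_inv r' rb' i /\ \sum_(l < n1) r'`_l = \sum_(l < n1) r`_l + 1.
Proof.
case=> [[sr srb sc _ [E [rowE colE]]] r_sorted sat_tail] sum_lt.
rewrite -(sum_degU_col_exact colE) in sum_lt.
have [i scan_i [lt_ri sat_above]] :=
  scan_unsaturated sr srb rowE sat_tail sum_lt.
have [E1 [rowE1 colE1 lt_deg1]] :=
  raise_degree sr r_sorted rowE sat_above lt_ri sum_lt.
set j := find (pred1 r`_i) r.
have r_j : r`_j = r`_i by apply: nth_index; rewrite mem_nth ?sr.
have le_ji : (j <= i)%N by apply: index_nth; rewrite sr.
have lt_j : (j < n1)%N := leq_ltn_trans le_ji (ltn_ord i).
have [E2 [rowE2 colE2]] :=
  realize_incr_swap (esym r_j : r`_i = r`_(Ordinal lt_j)) rowE1 lt_deg1.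
exists (set_nth 0 r j (r`_j + 1)), (set_nth 0 (set_nth 0 rb i rb`_j) j rb`_i).
exists i.
rewrite /= scan_i; split=> //; split; last first.
  by rewrite (sum_set_nth r (Ordinal lt_j)) addrA subrK.
split.
- split=> //; first by rewrite size_set_nth sr; apply/maxn_idPr.
    rewrite !size_set_nth srb !maxnA.
    by apply/maxn_idPr; rewrite geq_max ltn_ord lt_j.
  by exists E2; split=> // y; rewrite colE2 colE1; apply: colE.
- apply: nonincreasing_incr_first; rewrite ?sr // => a lt_aj.
  by rewrite r_j; have /= /negbT := before_find 0 lt_aj.
- move=> l lt_il; rewrite !nth_set_nth /= (gtn_eqF (leq_ltn_trans le_ji lt_il)).
  by rewrite nth_set_nth /= (gtn_eqF lt_il); apply: sat_above.
Qed.

Lemma phase_two_reach (rl ru : seq int) k :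
  realizable n1 n2 rl ru c c -> nonincreasing rl ->
  \sum_(l < n1) rl`_l + k%:Z <= \sum_(j < n2) c`_j ->
  exists r rb i, phase_two rl ru k = Some (r, rb, i) /\
    phase_two_inv r rb i /\ \sum_(l < n1) r`_l = \sum_(l < n1) rl`_l + k%:Z.
Proof.
move=> real_l rl_sorted; elim: k => [|k IHk] le_k.
  exists rl, ru, (size rl).-1; split=> //; split; last by rewrite addr0.
  split=> // l lt_l; have [sl su _ _ _] := real_l.
  have le_l : (size rl <= l)%N by case: (size rl) lt_l.
  by rewrite !nth_default // su -sl.
have le_k' : \sum_(l < n1) rl`_l + k%:Z <= \sum_(j < n2) c`_j.
  by apply: le_trans le_k; rewrite lerD2l lez_nat leqnSn.
have [r [rb [i [run_k [inv_k sum_k]]]]] := IHk le_k'.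
have lt_sum : \sum_(l < n1) r`_l < \sum_(j < n2) c`_j.
  by rewrite sum_k; apply: lt_le_trans le_k; rewrite ltrD2l ltz_nat ltnSn.
have [r' [rb' [i' [step_k [inv' sum']]]]] := step_inv inv_k lt_sum.
exists r', rb', i'; split; first by rewrite /= run_k.
by split=> //; rewrite sum' sum_k -addrA -PoszD addn1.
Qed.

End PhaseTwo.

Theorem lemma3 (n1 n2 : nat) (rl ru c : seq int) :
  realizable n1 n2 rl ru c c ->
  nonincreasing rl -> nonincreasing c ->
  (forall i : nat, (i < n1)%N -> rl`_i <= ru`_i) ->
  forall k : nat,
    k%:Z <= \sum_(x <- c) x - \sum_(x <- rl) x ->
    exists r rb i,
      phase_two rl ru k = Some (r, rb, i) /\
      (realizable n1 n2 r r c c <-> k%:Z = \sum_(x <- c) x - \sum_(x <- rl) x).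
Proof.
move=> real_l rl_sorted _ _ k.
have [sl _ sc _ _] := real_l.
rewrite [\sum_(x <- c) x](big_nth 0) [\sum_(x <- rl) x](big_nth 0) !big_mkord.
rewrite sl sc lerBrDl => le_k.
have [r [rb [i [run_k [[real_k _ _] sum_k]]]]] :=
  phase_two_reach real_l rl_sorted le_k.
exists r, rb, i; split=> //.
rewrite (realizable_exact real_k) sum_k [_ + k%:Z]addrC.
by split=> [<-|->]; [rewrite addrK | rewrite subrK].
Qed.
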